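(* Let $Q\in\mathbb{R}^{n\times n}$ be symmetric and doubly stochastic with eigenvalues $1=\lambda_1>\lambda_2\ge\cdots\ge\lambda_n>-1$. Let $\delta\in(0,1)$ and $\gamma\in(0,1/4)$, and let $\tau\in\mathbb{N}$ satisfy $$\tau\ge\left\lceil\frac{2}{\gamma(1-\lambda_2)}\max\left\{4\ln\Big(\frac{2}{\gamma(1-\lambda_2)}\Big),\ \gamma(1-\lambda_2)-\ln\frac{\sqrt{\delta}}{4}\right\}\right\rceil.$$ Then $\|\mathbf{J}_\gamma^\tau\|^2\le\delta<1$, where $\mathbf{J}_\gamma^\tau$ is the $\tau$-fold product of $\mathbf{J}_\gamma$ with itself and $$\mathbf{J}_\gamma=\begin{bmatrix}\bar{\mathbf{I}}_n-\gamma\mathbf{Q}' & 0 & -(\bar{\mathbf{I}}_n-\gamma\mathbf{Q}')\\ 0 & \bar{\mathbf{I}}_n-\gamma\mathbf{Q}' & -\bar{\mathbf{I}}_n\\ 0&0&\bar{\mathbf{I}}_n-\gamma\mathbf{Q}'\end{bmatrix}\in\mathbb{R}^{3nd\times 3nd}.$$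
   Context: $d\in\mathbb{N}$; $\bar{\mathbf{I}}_n=(I_n-\frac1n1_n1_n^T)\otimes I_d$ and $\mathbf{Q}'=(I_n-Q)\otimes I_d$, where $1_n$ is the all-ones vector and $\otimes$ the Kronecker product. $\|\cdot\|$ is the spectral ($\ell_2$ operator) norm and $\lceil\cdot\rceil$ the ceiling function. *)

From HB Require Import structures.
From mathcomp Require Import all_boot all_order all_algebra.
From mathcomp Require Import mxtens.
From mathcomp Require Import classical_sets reals exp.
Set Implicit Arguments. Unset Strict Implicit. Unset Printing Implicit Defensive.
Import Order.TTheory GRing.Theory Num.Theory.
Local Open Scope ring_scope.
Local Open Scope classical_set_scope.

Definition vnorm (R : realType) (m : nat) (x : 'cV[R]_m) : R :=
  Num.sqrt (\sum_(i < m) x i 0 ^+ 2).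

Definition spec_norm (R : realType) (m p : nat) (A : 'M[R]_(m, p)) : R :=
  sup [set vnorm (A *m x) | x in [set x : 'cV[R]_p | vnorm x <= 1]].

Definition mxpow (R : realType) (m : nat) (A : 'M[R]_m) (k : nat) : 'M[R]_m :=
  iter k (mulmx A) 1%:M.

Definition doubly_stochastic (R : realType) (n : nat) (Q : 'M[R]_n) : Prop :=
  (forall i j, 0 <= Q i j) /\
  (forall i, \sum_(j < n) Q i j = 1) /\
  (forall j, \sum_(i < n) Q i j = 1).

Definition Ibar (R : realType) (n d : nat) : 'M[R]_(n * d) :=
  tensmx (1%:M - (n%:R)^-1 *: const_mx 1 : 'M[R]_n) (1%:M : 'M[R]_d).

Definition Qprime (R : realType) (n d : nat) (Q : 'M[R]_n) : 'M[R]_(n * d) :=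
  tensmx (1%:M - Q) (1%:M : 'M[R]_d).

(* The 3x3 block matrix J_gamma, of size 3nd = (nd + nd) + nd. *)
Definition Jgamma (R : realType) (n d : nat) (Q : 'M[R]_n) (gamma : R)
  : 'M[R]_(n * d + n * d + n * d) :=
  let A := Ibar R n d - gamma *: Qprime d Q in
  block_mx (block_mx A 0 0 A) (col_mx (- A) (- Ibar R n d))
           (row_mx 0 0) A.

From HB Require Import structures.
From mathcomp Require Import all_boot all_order all_algebra.
From mathcomp Require Import mxtens.
From mathcomp Require Import classical_sets reals sequences exp.
From mathcomp Require Import sesquilinear spectral complex.
From mathcomp Require Import ring lra.
Set Implicit Arguments. Unset Strict Implicit. Unset Printing Implicit Defensive.
Import Order.TTheory GRing.Theory Num.Theory.
Local Open Scope ring_scope.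

(* Write A := Ibar - gamma Q' = A0 (x) I_d with A0 := P0 - gamma (I - Q) and
   P0 := I - 11^T/n.  Since Q is symmetric with Q1 = 1 and 1 is a simple
   eigenvalue, in an orthonormal eigenbasis of Q the matrix P0 is diagonal
   with entries 0 (on 1) and 1, and A0 with entries 0 and 1 - gamma (1 - l_i),
   i >= 2, all in [0, rho] for rho := 1 - gamma (1 - l_2).  Hence |A| <= rho
   and |Ibar| <= 1.  As Ibar A = A Ibar = A, the power J^k is block upper
   triangular with diagonal blocks A^k and off-diagonal blocks -k A^k and
   -k A^(k-1) Ibar, so |J^k|^2 <= 5 (k rho^(k-1))^2.  Finally, with
   a := 1 - rho, the bounds 1 - a <= e^-a and y <= 2 e^(y/2) show that the
   choice of tau forces tau rho^(tau-1) <= sqrt(delta)/8. *)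

Definition sqnorm (T : numDomainType) n (x : 'cV[T]_n) : T :=
  \sum_(i < n) `|x i 0| ^+ 2.

Definition sqnorm_bounded (T : numDomainType) m n (A : 'M[T]_(m, n)) (c : T) :=
  forall x, sqnorm (A *m x) <= c * sqnorm x.

Section SqNorm.
Variable T : numDomainType.

Lemma sqnorm_ge0 n (x : 'cV[T]_n) : 0 <= sqnorm x.
Proof. by apply: sumr_ge0 => i _; rewrite exprn_ge0. Qed.

Lemma sqnorm_col_mx m1 m2 (u : 'cV[T]_m1) (v : 'cV[T]_m2) :
  sqnorm (col_mx u v) = sqnorm u + sqnorm v.
Proof.
by rewrite /sqnorm big_split_ord /=; congr (_ + _); apply: eq_bigr => i _;
  rewrite ?col_mxEu ?col_mxEd.
Qed.

Lemma sqnormZ n c (x : 'cV[T]_n) : sqnorm (c *: x) = `|c| ^+ 2 * sqnorm x.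
Proof.
by rewrite /sqnorm mulr_sumr; apply: eq_bigr => i _; rewrite mxE normrM exprMn.
Qed.

Lemma sqnormN n (x : 'cV[T]_n) : sqnorm (- x) = sqnorm x.
Proof. by rewrite -scaleN1r sqnormZ normrN1 expr1n mul1r. Qed.

Lemma sqnorm_bounded_mulmx m n p (A : 'M[T]_(m, n)) (B : 'M[T]_(n, p)) a b :
  0 <= a -> sqnorm_bounded A a -> sqnorm_bounded B b ->
  sqnorm_bounded (A *m B) (a * b).
Proof.
move=> a0 hA hB x; rewrite -mulmxA -mulrA.
by apply: le_trans (hA _) _; rewrite ler_wpM2l.
Qed.

Lemma sqnorm_bounded_le m n (A : 'M[T]_(m, n)) c c' :
  c <= c' -> sqnorm_bounded A c -> sqnorm_bounded A c'.
Proof. by move=> cc' hA x; apply: le_trans (hA x) _; rewrite ler_wpM2r ?sqnorm_ge0. Qed.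

End SqNorm.

Lemma sqnormD_le (T : realDomainType) n (u v : 'cV[T]_n) :
  sqnorm (u + v) <= 2 * sqnorm u + 2 * sqnorm v.
Proof.
rewrite /sqnorm !mulr_sumr -big_split /=; apply: ler_sum => i _.
rewrite mxE !real_normK ?num_real //; have := sqr_ge0 (u i 0 - v i 0); nra.
Qed.

Definition centering (F : fieldType) n : 'M[F]_n := 1%:M - n%:R^-1 *: const_mx 1.

Section Unitary.
Variable C : numClosedFieldType.
Local Open Scope sesquilinear_scope.

Lemma sqnormE n (v : 'cV[C]_n) : sqnorm v = (v^t* *m v) 0 0.
Proof. by rewrite /sqnorm mxE; apply: eq_bigr => i _; rewrite !mxE normCK mulrC. Qed.

Lemma sqnorm_unitary n (U : 'M[C]_n) (v : 'cV[C]_n) :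
  U \is unitarymx -> sqnorm (U *m v) = sqnorm v.
Proof.
rewrite -trmxC_unitary => /unitarymxP; rewrite trmxCK => UtU.
by rewrite !sqnormE trmx_mul map_mxM mulmxA -(mulmxA _ _ U) UtU mulmx1.
Qed.

Lemma sqnorm_bounded_unitary_diag n (U : 'M[C]_n) (a : 'rV[C]_n) (r : C) :
  U \is unitarymx -> (forall j, `|a 0 j| <= r) ->
  sqnorm_bounded (U^t* *m diag_mx a *m U) (r ^+ 2).
Proof.
move=> hU ha z; rewrite -!mulmxA sqnorm_unitary ?trmxC_unitary //.
rewrite -(sqnorm_unitary z hU).
rewrite /sqnorm mulr_sumr; apply: ler_sum => i _.
rewrite mul_diag_mx mxE normrM exprMn ler_wpM2r ?exprn_ge0 //.
by rewrite lerXn2r ?nnegrE ?(le_trans _ (ha i)).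
Qed.

Lemma eigvec_projector n (U : 'M[C]_n) (a : 'rV[C]_n) (j0 : 'I_n) (v : 'cV[C]_n) :
  U \is unitarymx -> (forall j, j != j0 -> a 0 j != 1) ->
  (U^t* *m diag_mx a *m U) *m v = v ->
  v *m v^t* = sqnorm v *: (U^t* *m delta_mx j0 j0 *m U).
Proof.
move=> hU a1 Ev; have UUt : U *m U^t* = 1%:M by apply/unitarymxP.
have Ew : diag_mx a *m (U *m v) = U *m v.
  by rewrite -{2}Ev !mulmxA UUt mul1mx.
have w0 j : j != j0 -> (U *m v) j 0 = 0.
  move=> /a1 aj1; move/matrixP: Ew => /(_ j 0); rewrite mul_diag_mx mxE.
  move=> /eqP; rewrite -subr_eq0 -{2}(mul1r (_ j 0)) -mulrBl mulf_eq0 subr_eq0.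
  by rewrite (negbTE aj1) => /eqP.
set w := U *m v in Ew w0 *.
have sqw : sqnorm v = sqnorm w by rewrite sqnorm_unitary.
have Vw : v = U^t* *m w.
  by rewrite mulmxA -[U^t*]invmx_unitary // mulVmx ?unitarymx_unit ?mul1mx.
rewrite sqw Vw trmx_mul map_mxM trmxCK mulmxA -(mulmxA _ w) scalemxAl scalemxAr.
clearbody w; congr (_ *m _ *m _).
apply/matrixP => i k; rewrite !mxE big_ord1 !mxE.
have [->|ij] := eqVneq i j0; last by rewrite w0 // mul0r mulr0.
have [->|kj] := eqVneq k j0; last by rewrite (w0 k) // rmorph0 !mulr0.
rewrite -normCK /sqnorm (bigD1 j0) //= big1 ?addr0 ?mulr1 //.
by move=> j /w0 ->; rewrite normr0 expr0n.
Qed.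

Lemma centering_unitary_diag n (U : 'M[C]_n) (a : 'rV[C]_n) (j0 : 'I_n) :
  (0 < n)%N -> U \is unitarymx -> (forall j, j != j0 -> a 0 j != 1) ->
  (U^t* *m diag_mx a *m U) *m (const_mx 1 : 'cV_n) = const_mx 1 ->
  centering C n = U^t* *m diag_mx (\row_j (j != j0)%:R) *m U.
Proof.
move=> n_gt0 hU a_neq1 M1; set v := const_mx 1 : 'cV[C]_n.
have sqv : sqnorm v = n%:R.
  rewrite /sqnorm (eq_bigr (fun=> 1)) ?sumr_const ?card_ord // => i _.
  by rewrite mxE normr1 expr1n.
have -> : centering C n = 1%:M - U^t* *m delta_mx j0 j0 *m U.
  rewrite /centering; have -> : const_mx 1 = v *m v^t*.
    by apply/matrixP=> i k; rewrite !mxE big_ord1 !mxE rmorph1 mulr1.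
  rewrite (eigvec_projector hU a_neq1 M1) sqv scalerA mulVf ?scale1r //.
  by rewrite pnatr_eq0 -lt0n.
have -> : 1%:M = U^t* *m U by rewrite -invmx_unitary // mulVmx // unitarymx_unit.
rewrite -{1}[U^t*]mulmx1 -mulmxBl -mulmxBr; congr (_ *m _ *m _).
apply/matrixP => i k; rewrite !mxE; case: (eqVneq i k) => [<-|ik].
  by rewrite andbb; case: (i == j0); rewrite ?subrr ?subr0.
have -> : (i == j0) && (k == j0) = false.
  by apply/negbTE; apply: contra ik => /andP[/eqP -> /eqP ->].
by rewrite subrr mulr0n.
Qed.

End Unitary.

Lemma char_poly_conj (F : fieldType) n (U D : 'M[F]_n) : U \in unitmx ->
  char_poly (invmx U *m D *m U) = char_poly D.
Proof.
move=> hU.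
have E : char_poly_mx (invmx U *m D *m U) =
  map_mx polyC (invmx U) *m char_poly_mx D *m map_mx polyC U.
  rewrite /char_poly_mx mulmxBr mulmxBl -!map_mxM.
  by rewrite mul_mx_scalar -scalemxAl -map_mxM mulVmx // map_mx1 scalemx1.
rewrite /char_poly E !det_mulmx mulrC mulrA -!det_mulmx -map_mxM mulmxV //.
by rewrite map_mx1 mul1mx.
Qed.

Lemma perm_eq_diag_char_poly (F : fieldType) n (U : 'M[F]_n) (a : 'rV[F]_n)
    (s : seq F) : U \in unitmx ->
  char_poly (invmx U *m diag_mx a *m U) = \prod_(x <- s) ('X - x%:P) ->
  perm_eq [seq a 0 j | j : 'I_n] s.
Proof.
move=> hU; rewrite char_poly_conj // char_poly_trig ?diag_mx_is_trig // => E.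
apply: prod_XsubC_eq; rewrite -E big_map big_enum /=.
by apply: eq_bigr => j _; rewrite mxE eqxx mulr1n.
Qed.

Lemma perm_eq_simple_value (T : eqType) n (a : 'I_n -> T) (mu : nat -> T) (x : T) :
  (0 < n)%N -> perm_eq [seq a j | j : 'I_n] [seq mu i | i <- iota 1 n] ->
  mu 1%N = x -> (forall i, (2 <= i <= n)%N -> mu i != x) ->
  exists j0, a j0 = x /\
    forall j, j != j0 -> exists2 i, (2 <= i <= n)%N & a j = mu i.
Proof.
move=> n_gt0 Ea mu1 mux.
have count_x : count_mem x [seq mu i | i <- iota 1 n] = 1%N.
  rewrite -(prednK n_gt0) /= mu1 eqxx add1n.
  apply/eqP; rewrite eqSS; apply/eqP/count_memPn/mapP; case=> i.
  rewrite mem_iota add2n prednK // ltnS => /andP[i2 iltn] xmu.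
  by move: (mux i); rewrite i2 iltn xmu eqxx => /(_ isT).
have card_x : #|[pred j | a j == x]| = 1%N.
  rewrite -count_x -(permP Ea) count_map cardE /enum_mem size_filter.
  by rewrite count_filter; apply: eq_count => j; rewrite !inE /= andbT.
have [j0 Hj0] := mem_card1 card_x.
have aj0 : a j0 = x by apply/eqP; move: (Hj0 j0); rewrite !inE eqxx.
exists j0; split=> // j jj0.
have : a j \in [seq mu i | i <- iota 1 n] by rewrite -(perm_mem Ea) map_f ?mem_enum.
case/mapP => i; rewrite mem_iota add1n ltnS => /andP[i1 iltn] aj.
exists i => //; rewrite iltn andbT ltn_neqAle i1 andbT.
apply/eqP => i1E; move/eqP: jj0; apply.
by move: (Hj0 j); rewrite !inE aj -i1E mu1 eqxx => /esym/eqP.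
Qed.

Section Centering.
Variables (F : numFieldType) (n : nat).
Hypothesis n_gt0 : (0 < n)%N.
Local Notation J := (const_mx 1 : 'M[F]_n).

Lemma const_mx1_mul : J *m J = n%:R *: J.
Proof.
apply/matrixP => i j; rewrite !mxE (eq_bigr (fun=> 1)) ?sumr_const ?card_ord.
  by rewrite mulr1.
by move=> k _; rewrite !mxE mulr1.
Qed.

Lemma centering_mulmx (M : 'M[F]_n) : J *m M = 0 -> centering F n *m M = M.
Proof. by move=> JM; rewrite mulmxBl mul1mx -scalemxAl JM scaler0 subr0. Qed.

Lemma mulmx_centering (M : 'M[F]_n) : M *m J = 0 -> M *m centering F n = M.
Proof. by move=> MJ; rewrite mulmxBr mulmx1 -scalemxAr MJ scaler0 subr0. Qed.

Lemma centering_idem : centering F n *m centering F n = centering F n.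
Proof.
apply: centering_mulmx; rewrite mulmxBr mulmx1 -scalemxAr const_mx1_mul scalerA.
by rewrite mulVf ?scale1r ?subrr // pnatr_eq0 -lt0n.
Qed.

Lemma centering_mul_stochastic (Q : 'M[F]_n) (gamma : F) :
  (forall i, \sum_(j < n) Q i j = 1) -> (forall j, \sum_(i < n) Q i j = 1) ->
  let A := centering F n - gamma *: (1%:M - Q) in
  centering F n *m A = A /\ A *m centering F n = A.
Proof.
move=> rowQ colQ A.
have QJ : Q *m J = J.
  apply/matrixP => i j; rewrite !mxE -[RHS](rowQ i).
  by apply: eq_bigr => k _; rewrite mxE mulr1.
have JQ : J *m Q = J.
  apply/matrixP => i j; rewrite !mxE -[RHS](colQ j).
  by apply: eq_bigr => k _; rewrite mxE mul1r.
split.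
  rewrite mulmxBr centering_idem -scalemxAr centering_mulmx //.
  by rewrite mulmxBr mulmx1 JQ subrr.
rewrite mulmxBl centering_idem -scalemxAl mulmx_centering //.
by rewrite mulmxBl mul1mx QJ subrr.
Qed.

End Centering.

(* The spectral theorem of MathComp is stated over a numClosedFieldType, so real
   symmetric matrices are diagonalised in R[i] and bounds are transferred back. *)
Section SymmetricStochastic.
Variable R : rcfType.
Local Notation rc := (real_complex R).
Local Open Scope sesquilinear_scope.

Lemma normc_real (x : R) : `|x%:C%C| = (`|x|)%:C%C.
Proof. by rewrite normc_def /= expr0n addr0 sqrtr_sqr. Qed.

Lemma sqnorm_map_complex n (x : 'cV[R]_n) : sqnorm (map_mx rc x) = (sqnorm x)%:C%C.
Proof.
by rewrite /sqnorm rmorph_sum; apply: eq_bigr => i _; rewrite mxE normc_real rmorphXn.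
Qed.

Lemma sqnorm_bounded_complex m n (A : 'M[R]_(m, n)) (c : R) :
  sqnorm_bounded (map_mx rc A) (c%:C)%C -> sqnorm_bounded A c.
Proof.
move=> hA x; have := hA (map_mx rc x).
by rewrite -map_mxM !sqnorm_map_complex -rmorphM lecR.
Qed.

Lemma sqnorm_bounded_complex_diag n (M : 'M[R]_n) (U : 'M[R[i]]_n) a (r : R) :
  U \is unitarymx -> map_mx rc M = U^t* *m diag_mx a *m U ->
  (forall j, `|a 0 j| <= r%:C%C) -> sqnorm_bounded M (r ^+ 2).
Proof.
move=> hU EM ha; apply: sqnorm_bounded_complex.
by rewrite rmorphXn EM; exact: sqnorm_bounded_unitary_diag.
Qed.

Lemma hermsymmx_map_complex n (Q : 'M[R]_n) : Q^T = Q -> map_mx rc Q \is hermsymmx.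
Proof.
move=> sQ; apply/is_hermitianmxP; rewrite expr0 scale1r.
apply/matrixP => i j; rewrite !mxE conj_Creal ?complex_real //.
by rewrite -[in RHS]sQ mxE.
Qed.

Lemma symmetric_stochastic_spectral n (Q : 'M[R]_n) (lambda : nat -> R) :
  (0 < n)%N -> Q^T = Q -> (forall i, \sum_(j < n) Q i j = 1) ->
  char_poly Q = \prod_(1 <= i < n.+1) ('X - (lambda i)%:P) ->
  lambda 1%N = 1 -> (forall i, (2 <= i <= n)%N -> lambda i < 1) ->
  exists U : 'M[R[i]]_n, exists a : 'rV[R[i]]_n, exists j0 : 'I_n,
    [/\ U \is unitarymx, map_mx rc Q = U^t* *m diag_mx a *m U, a 0 j0 = 1,
        forall j, j != j0 -> exists2 i, (2 <= i <= n)%N & a 0 j = (lambda i)%:C%C &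
        centering R[i] n = U^t* *m diag_mx (\row_j (j != j0)%:R) *m U].
Proof.
move=> n_gt0 sQ rowQ charQ l1 llt1.
set U := spectralmx (map_mx rc Q); set a := spectral_diag (map_mx rc Q).
have hU : U \is unitarymx := spectral_unitarymx _.
have EQ : map_mx rc Q = U^t* *m diag_mx a *m U.
  rewrite -invmx_unitary //; apply/orthomx_spectralP.
  exact/hermitian_normalmx/hermsymmx_map_complex.
have spec_a : perm_eq [seq a 0 j | j : 'I_n] [seq (lambda i)%:C%C | i <- iota 1 n].
  apply: perm_eq_diag_char_poly (unitarymx_unit hU) _.
  rewrite invmx_unitary // -EQ -map_char_poly charQ rmorph_prod big_map.
  by rewrite /index_iota subn1; apply: eq_bigr => i _; exact: map_polyXsubC.
have lneq1 i : (2 <= i <= n)%N -> (lambda i)%:C%C != 1 :> R[i].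
  by move=> /llt1 /lt_eqF; rewrite -(rmorph1 rc) (inj_eq (@complexI _)) => ->.
have [j0 [aj0 aj]] := perm_eq_simple_value n_gt0 spec_a (congr1 _ l1) lneq1.
have a_neq1 j : j != j0 -> a 0 j != 1 by move=> /aj[i /lneq1 ? ->].
exists U, a, j0; split => //; apply: (centering_unitary_diag n_gt0 hU a_neq1).
rewrite -EQ; apply/matrixP => i k; rewrite !mxE.
under eq_bigr do rewrite !mxE mulr1.
by rewrite -rmorph_sum rowQ rmorph1.
Qed.

Lemma sqnorm_bounded_centering_step n (Q : 'M[R]_n) (lambda : nat -> R) (gamma rho : R) :
  (0 < n)%N -> Q^T = Q -> (forall i, \sum_(j < n) Q i j = 1) ->
  char_poly Q = \prod_(1 <= i < n.+1) ('X - (lambda i)%:P) ->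
  lambda 1%N = 1 -> (forall i, (2 <= i <= n)%N -> lambda i < 1) -> 0 <= rho ->
  (forall i, (2 <= i <= n)%N -> `|1 - gamma * (1 - lambda i)| <= rho) ->
  sqnorm_bounded (centering R n - gamma *: (1%:M - Q)) (rho ^+ 2) /\
  sqnorm_bounded (centering R n) 1.
Proof.
move=> n_gt0 sQ rowQ charQ l1 llt1 rho0 hrho.
have [U [a [j0 [hU EQ aj0 aj EP]]]] :=
  symmetric_stochastic_spectral n_gt0 sQ rowQ charQ l1 llt1.
have UtU : U^t* *m U = 1%:M by rewrite -invmx_unitary // mulVmx // unitarymx_unit.
have EP' : map_mx rc (centering R n) = U^t* *m diag_mx (\row_j (j != j0)%:R) *m U.
  by rewrite -EP map_mxB map_mx1 map_mxZ fmorphV rmorph_nat map_const_mx rmorph1.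
split; last first.
  rewrite -(expr1n _ 2); apply: sqnorm_bounded_complex_diag hU EP' _ => j.
  by rewrite mxE rmorph1; case: (j != j0); rewrite ?normr1 ?normr0 ?ler01.
set b := \row_j ((j != j0)%:R - gamma%:C%C * (1 - a 0 j)).
apply: (sqnorm_bounded_complex_diag (a := b) hU).
  have -> : diag_mx b =
             diag_mx (\row_j (j != j0)%:R) - gamma%:C%C *: (1%:M - diag_mx a).
    apply/matrixP => i k; rewrite !mxE.
    by case: (i == k); rewrite ?mulr1n ?mulr0n ?subrr ?mulr0 ?subr0.
  rewrite map_mxB map_mxZ EP' map_mxB map_mx1 EQ.
  by rewrite mulmxBr mulmxBl -scalemxAr -scalemxAl mulmxBr mulmxBl mulmx1 UtU.
move=> j; rewrite mxE; have [->|jj0] := eqVneq j j0.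
  by rewrite aj0 subrr mulr0 subr0 normr0 ler0c.
have [i i2n ->] := aj j jj0.
by rewrite /= -(rmorph1 rc) -!rmorphB -rmorphM -rmorphB normc_real lecR hrho.
Qed.

End SymmetricStochastic.

Section Kronecker.
Variable T : numDomainType.

Lemma tensmx_subZl m n p q (c : T) (X Y : 'M[T]_(m, n)) (B : 'M[T]_(p, q)) :
  (X - c *: Y) *t B = X *t B - c *: (Y *t B).
Proof.
by apply/matrixP => k l; rewrite !mxE mulrBl mulrA.
Qed.

Lemma big_mxtens_index (V : nmodType) m n (F : 'I_(m * n) -> V) :
  \sum_(k < m * n) F k = \sum_(j < n) \sum_(i < m) F (mxtens_index (i, j)).
Proof.
rewrite (reindex (@mxtens_index m n)) /=; last first.
  by apply: onW_bij; exists (@mxtens_unindex m n);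
    [exact: mxtens_indexK | exact: mxtens_unindexK].
by rewrite exchange_big pair_big; apply: eq_big => // -[].
Qed.

Definition mxtens_slice m n (x : 'cV[T]_(m * n)) (j : 'I_n) : 'cV[T]_m :=
  \col_i x (mxtens_index (i, j)) 0.

Lemma sqnorm_mxtens_slice m n (x : 'cV[T]_(m * n)) :
  sqnorm x = \sum_(j < n) sqnorm (mxtens_slice x j).
Proof.
rewrite /sqnorm big_mxtens_index; apply: eq_bigr => j _.
by apply: eq_bigr => i _; rewrite mxE.
Qed.

Lemma mxtens_slice_mul m n (B : 'M[T]_m) (x : 'cV[T]_(m * n)) j :
  mxtens_slice ((B *t (1%:M : 'M_n)) *m x) j = B *m mxtens_slice x j.
Proof.
apply/matrixP => i k; rewrite !mxE big_mxtens_index (bigD1 j) //=.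
rewrite [X in _ + X]big1 ?addr0.
  by apply: eq_bigr => i' _; rewrite tensmxE !mxE eqxx mulr1.
move=> j' jj'; apply: big1 => i' _.
by rewrite tensmxE mxE eq_sym (negbTE jj') mulr0 mul0r.
Qed.

Lemma sqnorm_bounded_tensmx1 m n (B : 'M[T]_m) (c : T) :
  sqnorm_bounded B c -> sqnorm_bounded (B *t (1%:M : 'M_n)) c.
Proof.
move=> hB x; rewrite !sqnorm_mxtens_slice mulr_sumr; apply: ler_sum => j _.
by rewrite mxtens_slice_mul.
Qed.

End Kronecker.

Section SpectralNorm.
Variable R : realType.

Lemma vnormE n (x : 'cV[R]_n) : vnorm x = Num.sqrt (sqnorm x).
Proof. by congr Num.sqrt; apply: eq_bigr => i _; rewrite real_normK ?num_real. Qed.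

Lemma spec_norm_sqr_le m n (A : 'M[R]_(m, n)) c : 0 <= c ->
  sqnorm_bounded A c -> spec_norm A ^+ 2 <= c.
Proof.
move=> c0 hA; rewrite /spec_norm; set S := (X in sup X).
have vnorm0 p : vnorm (0 : 'cV[R]_p) = 0.
  by rewrite vnormE /sqnorm big1 ?sqrtr0 // => i _; rewrite mxE normr0 expr0n.
have S0 : S 0 by exists 0; rewrite /= ?mulmx0 vnorm0 ?ler01.
have ubS : ubound S (Num.sqrt c).
  move=> _ [x /= x1 <-]; rewrite vnormE ler_wsqrtr //.
  have x1' : sqnorm x <= 1.
    by move: x1; rewrite vnormE -{1}sqrtr1 ler_sqrt ?ler01.
  by apply: le_trans (hA x) _; rewrite ler_piMr.
have sup_ge0 : 0 <= sup S by apply: ub_le_sup S0; exists (Num.sqrt c).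
have sup_le : sup S <= Num.sqrt c by apply: ge_sup => //; exists 0.
by rewrite -(sqr_sqrtr c0) lerXn2r ?nnegrE ?sqrtr_ge0.
Qed.

End SpectralNorm.

Section MatrixPowers.
Variable R : realType.

Lemma mxpowSr N (A : 'M[R]_N) k : mxpow A k.+1 = mxpow A k *m A.
Proof.
elim: k => [|k IH]; first by rewrite /mxpow /= mulmx1 mul1mx.
by rewrite [LHS]/mxpow iterS -/(mxpow A k.+1) {1}IH mulmxA.
Qed.

Lemma sqnorm_bounded_mxpow N (A : 'M[R]_N) c : 0 <= c ->
  sqnorm_bounded A c -> forall k, sqnorm_bounded (mxpow A k) (c ^+ k).
Proof.
move=> c0 hA; elim=> [|k IH] x; first by rewrite mul1mx expr0 mul1r.
by rewrite exprS; apply: sqnorm_bounded_mulmx.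
Qed.

Section BlockJ.
Variables (N : nat) (A P : 'M[R]_N).
Hypotheses (PA : P *m A = A) (AP : A *m P = A).

Lemma mulmx_mxpowS k : P *m mxpow A k.+1 = mxpow A k.+1.
Proof. by rewrite [mxpow A k.+1]/mxpow iterS mulmxA PA. Qed.

Lemma mxpowS_mulmx k : mxpow A k.+1 *m P = mxpow A k.+1.
Proof. by rewrite mxpowSr -mulmxA AP. Qed.

Definition Jblock : 'M[R]_(N + N + N) :=
  block_mx (block_mx A 0 0 A) (col_mx (- A) (- P)) (row_mx 0 0) A.

Lemma mxpow_Jblock k : mxpow Jblock k =
  block_mx (block_mx (mxpow A k) 0 0 (mxpow A k))
    (col_mx (- (k%:R *: mxpow A k)) (- (k%:R *: (mxpow A k.-1 *m P))))
    0 (mxpow A k).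
Proof.
elim: k => [|k IH].
  rewrite /mxpow /= !scale0r oppr0 col_mx0.
  by rewrite -[in X in block_mx X _ _ _]scalar_mx_block scalar_mx_block.
rewrite [LHS]/mxpow iterS -/(mxpow Jblock k) IH /Jblock row_mx0.
rewrite !mulmx_block !mul0mx !mulmx0 !addr0 !add0r mul_block_col mul_col_mx.
rewrite add_col_mx !mul0mx !add0r !addr0; congr block_mx; congr col_mx.
  by rewrite mulmxN -scalemxAr mulNmx -opprD mulrSr scalerDl scale1r.
rewrite mulmxN -scalemxAr mulNmx -opprD mulrSr scalerDl scale1r /=.
case: k {IH} => [|k]; first by rewrite /mxpow /= !mulr0n !scale0r !add0r mulmx1 mul1mx.
by rewrite mulmxA /= -/(mxpow A k.+1) mulmx_mxpowS mxpowS_mulmx.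
Qed.

Lemma sqnorm_bounded_mxpow_Jblock (rho : R) k :
  0 <= rho <= 1 -> (0 < k)%N ->
  sqnorm_bounded A (rho ^+ 2) -> sqnorm_bounded P 1 ->
  sqnorm_bounded (mxpow Jblock k) (5 * (k%:R * rho ^+ k.-1) ^+ 2).
Proof.
move=> /andP[rho0 rho1] k_gt0 hA hP.
set s := (rho ^+ k.-1) ^+ 2.
have s0 : 0 <= s by rewrite sqr_ge0.
have hAk1 : sqnorm_bounded (mxpow A k.-1) s.
  by rewrite /s exprAC; apply: sqnorm_bounded_mxpow; rewrite ?sqr_ge0.
have hAk : sqnorm_bounded (mxpow A k) s.
  rewrite -(prednK k_gt0); apply: sqnorm_bounded_le (sqnorm_bounded_mulmx _ hA hAk1).
    by rewrite ler_piMl // expr_le1.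
  by rewrite sqr_ge0.
have hAkP : sqnorm_bounded (mxpow A k.-1 *m P) s.
  by rewrite -[s]mulr1; apply: sqnorm_bounded_mulmx.
move=> x; rewrite -[x]vsubmxK -[usubmx x]vsubmxK mxpow_Jblock.
set x1 := usubmx (usubmx x); set x2 := dsubmx (usubmx x); set x3 := dsubmx x.
rewrite !mul_block_col !mul0mx !addr0 !add0r mul_col_mx add_col_mx !sqnorm_col_mx.
have offdiag (B : 'M[R]_N) y : sqnorm_bounded B s ->
    sqnorm (mxpow A k *m y + - (k%:R *: B) *m x3) <=
    2 * (s * sqnorm y) + 2 * (k%:R ^+ 2 * (s * sqnorm x3)).
  move=> hB; apply: le_trans (sqnormD_le _ _) _.
  rewrite mulNmx sqnormN -scalemxAl sqnormZ ger0_norm //.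
  by rewrite lerD // ler_wpM2l // ler_wpM2l ?sqr_ge0.
have k1 : 1 <= k%:R ^+ 2 :> R by rewrite expr_ge1 // ler1n.
have := offdiag _ x1 hAk; have := offdiag _ x2 hAkP; have := hAk x3.
rewrite exprMn -/s; set K := k%:R ^+ 2 in k1 *.
have := mulr_ge0 s0 (sqnorm_ge0 x1); have := mulr_ge0 s0 (sqnorm_ge0 x2).
have := mulr_ge0 s0 (sqnorm_ge0 x3); nra.
Qed.

End BlockJ.
End MatrixPowers.

Lemma sqnorm_bounded_mxpow_Jgamma (R : realType) n d (Q : 'M[R]_n) gamma rho k :
  (0 < n)%N -> (forall i, \sum_(j < n) Q i j = 1) ->
  (forall j, \sum_(i < n) Q i j = 1) -> 0 <= rho <= 1 -> (0 < k)%N ->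
  sqnorm_bounded (centering R n - gamma *: (1%:M - Q)) (rho ^+ 2) ->
  sqnorm_bounded (centering R n) 1 ->
  sqnorm_bounded (mxpow (Jgamma d Q gamma) k) (5 * (k%:R * rho ^+ k.-1) ^+ 2).
Proof.
move=> n_gt0 rowQ colQ rho01 k_gt0 hA0 hP0.
have [PA AP] := centering_mul_stochastic n_gt0 gamma rowQ colQ.
set A0 := centering R n - gamma *: (1%:M - Q) in hA0 PA AP.
have -> : Jgamma d Q gamma = Jblock (A0 *t 1%:M) (Ibar R n d).
  by rewrite /Jgamma /Ibar /Qprime -tensmx_subZl.
apply: sqnorm_bounded_mxpow_Jblock rho01 k_gt0 _ _; last exact: sqnorm_bounded_tensmx1.
- by rewrite tensmx_mul PA mulmx1.
- by rewrite tensmx_mul AP mulmx1.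
- exact: sqnorm_bounded_tensmx1.
Qed.

Section TauBound.
Variable R : realType.

Lemma le_expR_half (y : R) : y <= 2 * expR (y / 2).
Proof. by have := expR_ge1Dx (y / 2); have := expR_ge0 (y / 2); lra. Qed.

Lemma mul_expRN_le (a y : R) : 0 < a -> 4 * ln (2 / a) <= y ->
  y * expR (- y) <= a ^+ 2 / 2.
Proof.
move=> a0 hy.
have half : expR (- (y / 2)) <= (a / 2) ^+ 2.
  rewrite -[X in _ <= X]lnK ?posrE ?exprn_gt0 ?divr_gt0 // ler_expR.
  by rewrite lnXn ?divr_gt0 // -[a / 2]invf_div lnV ?posrE ?divr_gt0 //; lra.
have e2 : expR (y / 2) * expR (- y) = expR (- (y / 2)).
  by rewrite -expRD; congr expR; field.
apply: le_trans (ler_wpM2r (expR_ge0 _) (le_expR_half y)) _.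
by rewrite -mulrA e2; lra.
Qed.

Lemma exprn_le_expR (a : R) k : a <= 1 -> (1 - a) ^+ k <= expR (- a * k%:R).
Proof.
move=> a1; rewrite expRM_natr lerXn2r ?nnegrE ?expR_ge0 ?subr_ge0 //.
by have := expR_ge1Dx (- a); lra.
Qed.

Lemma tau_bound (a delta : R) (tau : nat) : 0 < a -> a <= 2^-1 -> 0 < delta ->
  2 / a * Num.max (4 * ln (2 / a)) (a - ln (Num.sqrt delta / 4)) <= tau%:R ->
  (0 < tau)%N /\ tau%:R * (1 - a) ^+ tau.-1 <= Num.sqrt delta / 8.
Proof.
move=> a0 a2 d0 htau.
set t : R := tau%:R in htau *; set y := a * t / 2.
have sd0 : 0 < Num.sqrt delta / 4 by rewrite divr_gt0 ?sqrtr_gt0.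
have L0 : 0 < ln (2 / a) by apply: ln_gt0; rewrite ltr_pdivlMr //; lra.
have [hyL hyd] : 4 * ln (2 / a) <= y /\ a - ln (Num.sqrt delta / 4) <= y.
  apply/andP; rewrite -ge_max; move: htau; set M := Num.max _ _ => htau.
  have -> : M = a / 2 * (2 / a * M) by field; rewrite gt_eqF.
  have -> : y = a / 2 * t by rewrite /y mulrAC.
  by rewrite ler_pM2l ?divr_gt0.
have t0 : 0 < t.
  have : 0 < y by apply: lt_le_trans hyL; rewrite mulr_gt0.
  by rewrite /y; nra.
have tau_gt0 : (0 < tau)%N by rewrite -(ltr0n R).
split => //.
have Ey : expR (- y) <= expR (- a) * (Num.sqrt delta / 4).
  by rewrite -[X in _ * X]lnK ?posrE // -expRD ler_expR; lra.
have tEy : t * expR (- y) <= a.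
  have -> : t * expR (- y) = 2 / a * (y * expR (- y)).
    by rewrite /y; field; rewrite gt_eqF.
  apply: le_trans (ler_wpM2l _ (mul_expRN_le a0 hyL)) _; first by rewrite divr_ge0 ?ltW.
  by have -> : 2 / a * (a ^+ 2 / 2) = a by field; rewrite gt_eqF.
have pow : (1 - a) ^+ tau.-1 <= expR a * (expR (- y) * expR (- y)).
  apply: le_trans (exprn_le_expR _ _) _; first lra.
  have tm1 : tau.-1%:R = t - 1 :> R.
    by rewrite /t -[in RHS](prednK tau_gt0) -addn1 natrD addrK.
  by rewrite -!expRD ler_expR /y tm1; lra.
apply: le_trans (ler_wpM2l (ltW t0) pow) _.
have -> : t * (expR a * (expR (- y) * expR (- y))) =
    expR a * (t * expR (- y) * expR (- y)) by ring.
have tE0 : 0 <= t * expR (- y) by rewrite mulr_ge0 ?expR_ge0 ?ltW.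
apply: le_trans (ler_wpM2l (expR_ge0 a) (ler_pM tE0 (expR_ge0 _) tEy Ey)) _.
have -> : expR a * (a * (expR (- a) * (Num.sqrt delta / 4))) =
    a * (Num.sqrt delta / 4) * (expR a * expR (- a)) by ring.
by rewrite expRxMexpNx_1 mulr1; have := sqrtr_ge0 delta; nra.
Qed.

End TauBound.


Theorem lemma2 (R : realType) (n d : nat) (Q : 'M[R]_n) (lambda : nat -> R)
  (delta gamma : R) (tau : nat) :
  (2 <= n)%N ->
  Q^T = Q ->
  doubly_stochastic Q ->
  char_poly Q = \prod_(1 <= i < n.+1) ('X - (lambda i)%:P) ->
  lambda 1%N = 1 ->
  lambda 2%N < 1 ->
  (forall i j, (2 <= i)%N -> (i <= j)%N -> (j <= n)%N -> lambda j <= lambda i) ->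
  -1 < lambda n ->
  0 < delta < 1 ->
  0 < gamma < 4^-1 ->
  (Num.ceil (2 / (gamma * (1 - lambda 2%N)) *
     Num.max (4 * ln (2 / (gamma * (1 - lambda 2%N))))
             (gamma * (1 - lambda 2%N) - ln (Num.sqrt delta / 4)))
    <= tau%:Z)%R ->
  spec_norm (mxpow (Jgamma d Q gamma) tau) ^+ 2 <= delta /\ delta < 1.
Proof.
move=> n2 sQ [_ [rowQ colQ]] charQ l1 l2 lmono ln1 /andP[d0 d1] /andP[g0 g4] hceil.
split=> //; have n_gt0 : (0 < n)%N by apply: leq_trans n2.
have lam_bounds i : (2 <= i <= n)%N -> -1 < lambda i <= lambda 2%N.
  case/andP=> i2 iN; rewrite lmono //.
  by rewrite (lt_le_trans ln1 (lmono _ _ i2 iN (leqnn n))).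
have l2gt : -1 < lambda 2%N by case/andP: (lam_bounds 2%N (n2 : (2 <= 2 <= n)%N)).
set a := gamma * (1 - lambda 2%N) in hceil.
have a0 : 0 < a by rewrite mulr_gt0 // subr_gt0.
have a_le : a <= 2^-1 by rewrite /a; nra.
move: hceil; rewrite ceil_le_int pmulrn => /(tau_bound a0 a_le d0) [tau_gt0 htau].
have [hA0 hP0] : sqnorm_bounded (centering R n - gamma *: (1%:M - Q)) ((1 - a) ^+ 2) /\
    sqnorm_bounded (centering R n) 1.
  apply: (sqnorm_bounded_centering_step n_gt0 sQ rowQ charQ l1).
  - by move=> i /lam_bounds /andP[_ li2]; apply: le_lt_trans l2.
  - by rewrite subr_ge0 (le_trans a_le) // invf_le1; lra.
  - by move=> i /lam_bounds /andP[li1 li2]; rewrite ger0_norm /a; nra.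
have rho01 : 0 <= 1 - a <= 1 by apply/andP; split; lra.
apply: spec_norm_sqr_le; first exact: ltW.
apply: sqnorm_bounded_le _
  (sqnorm_bounded_mxpow_Jgamma (d := d) n_gt0 rowQ colQ rho01 tau_gt0 hA0 hP0).
have : 0 <= tau%:R * (1 - a) ^+ tau.-1 by rewrite mulr_ge0 ?exprn_ge0 //; lra.
by have := sqr_sqrtr (ltW d0); have := sqrtr_ge0 delta; nra.
Qed.
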